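(* Let $n\ge2$. Then $\mathcal{S}_n^\downarrow\subset\mathcal{S}_n$.
   Context: Let $\mathcal{C}$ be the set of smooth closed simple strictly convex (positive curvature) curves in $\mathbb{R}^2$, each parametrized by $\theta\in\mathbb{T}=\mathbb{R}/2\pi\mathbb{Z}$ so that the unit tangent at $C(\theta)$ is $(\cos\theta,\sin\theta)$, the outward normal is $\nu(\theta)=(\sin\theta,-\cos\theta)$, and $\rho(\theta)$ is the curvature there. Let $\Delta$ be the vertical axis, and $\mathcal{T}_n$ the set of closed curves symmetric with respect to $\Delta$ and invariant by the rotation of angle $2\pi/n$ about the origin. For $C\in\mathcal{C}\cap\mathcal{T}_n$ and $\theta\in(0,\pi/n]$, let $(0,\Pi(\theta))$ be the intersection point of the normal line to $C$ at $C(\theta)$ with $\Delta$ (with $\Pi(0)$ its limit as $\theta\searrow0$). Define $\mathcal{S}_n=\{C\in\mathcal{C}\cap\mathcal{T}_n:\ \Pi$ is increasing on $[0,\pi/n]\}$ and $\mathcal{S}_n^\downarrow=\{C\in\mathcal{C}\cap\mathcal{T}_n:\ \rho$ is decreasing on $[0,\pi/n]\}$. *)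

From Stdlib Require Import Reals.
From Coquelicot Require Import Coquelicot.
Open Scope R_scope.

(* A planar curve is given by its coordinate functions x, y : R -> R,
   theta |-> C(theta) = (x theta, y theta), theta read modulo 2*PI. *)

Definition smooth (f : R -> R) : Prop :=
  forall (k : nat) (t : R), ex_derive_n f k t.

Definition speed (x y : R -> R) (t : R) : R :=
  sqrt (Derive x t ^ 2 + Derive y t ^ 2).

(* Curvature rho(theta) of C at C(theta): in the tangent-angle
   parametrization, rho = d(theta)/ds = 1 / |C'(theta)|. *)
Definition curvature (x y : R -> R) (t : R) : R := / speed x y t.

(* The class \mathcal{C}: smooth closed simple curves, parametrized by the
   tangent angle theta (unit tangent at C(theta) is (cos theta, sin theta)),
   with positive (finite) curvature. *)
Definition in_C (x y : R -> R) : Prop :=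
  smooth x /\ smooth y /\
  (forall t, x (t + 2 * PI) = x t /\ y (t + 2 * PI) = y t) /\
  (forall s t, 0 <= s -> s < t -> t < 2 * PI -> (x s, y s) <> (x t, y t)) /\
  (forall t, 0 < speed x y t /\
             Derive x t = speed x y t * cos t /\
             Derive y t = speed x y t * sin t).

Definition in_T (n : nat) (x y : R -> R) : Prop :=
  (forall t, exists s, x s = - x t /\ y s = y t) /\
  (forall t, exists s,
      x s = cos (2 * PI / INR n) * x t - sin (2 * PI / INR n) * y t /\
      y s = sin (2 * PI / INR n) * x t + cos (2 * PI / INR n) * y t).

(* Pi(theta): ordinate of the intersection of the normal line at C(theta)
   (direction nu = (sin theta, - cos theta)) with the vertical axis,
   for theta in (0, PI/n]. *)
Definition Pi_fun (x y : R -> R) (t : R) : R :=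
  y t + x t * cos t / sin t.

Definition Pi_ext (x y : R -> R) (l : R) (t : R) : R :=
  if Req_EM_T t 0 then l else Pi_fun x y t.

Definition in_S (n : nat) (x y : R -> R) : Prop :=
  in_C x y /\ in_T n x y /\
  exists l : R,
    filterlim (Pi_fun x y) (at_right 0) (locally l) /\
    (forall a b, 0 <= a -> a <= b -> b <= PI / INR n ->
       Pi_ext x y l a <= Pi_ext x y l b).

Definition in_S_down (n : nat) (x y : R -> R) : Prop :=
  in_C x y /\ in_T n x y /\
  (forall a b, 0 <= a -> a <= b -> b <= PI / INR n ->
     curvature x y b <= curvature x y a).

From Stdlib Require Import Reals Lra ZArith.
From Coquelicot Require Import Coquelicot.
Open Scope R_scope.

(* Decreasing curvature means that the radius of curvature [speed x y] increases on
   [0, PI/n], a subinterval of [0, PI/2].  The lowest point C(0) is the only point at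
   its height, so the axial symmetry fixes it and x(0) = 0.  On [0, t], C is then at
   least as curved as the circle of radius [speed x y t] tangent to it at C(0), whence
   x(t) <= speed(t) sin t; this is exactly the sign of
   Pi' = (speed sin - x) / sin^2.  Finally Pi(0+) = y(0) + speed(0). *)

Lemma Rle_of_derive_nonneg (f f' : R -> R) (a b : R) :
  a <= b -> (forall c, a <= c <= b -> derivable_pt_lim f c (f' c)) ->
  (forall c, a < c < b -> 0 <= f' c) -> f a <= f b.
Proof.
  intros Hab Hd Hpos. destruct (Req_dec a b) as [<-|Hne]; [lra|].
  destruct (MVT_cor2 f f' a b ltac:(lra) Hd) as [c [E Hc]].
  assert (0 <= f' c * (b - a)) by (apply Rmult_le_pos; [apply Hpos|]; lra).
  lra.
Qed.

Lemma Rlt_of_derive_pos (f f' : R -> R) (a b : R) :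
  a < b -> (forall c, a <= c <= b -> derivable_pt_lim f c (f' c)) ->
  (forall c, a < c < b -> 0 < f' c) -> f a < f b.
Proof.
  intros Hab Hd Hpos. destruct (MVT_cor2 f f' a b Hab Hd) as [c [E Hc]].
  assert (0 < f' c * (b - a)) by (apply Rmult_lt_0_compat; [apply Hpos|]; lra).
  lra.
Qed.

Lemma is_lim_difference_quotient (f : R -> R) (a l : R) :
  derivable_pt_lim f a l -> is_lim (fun t => (f t - f a) / (t - a)) a l.
Proof.
  intros Hd. apply is_lim_spec. intros eps.
  destruct (Hd eps (cond_pos eps)) as [del Hdel]. exists del. intros t Ht Hta.
  assert (Hh : t - a <> 0) by (intro E; apply Hta; lra).
  specialize (Hdel (t - a) Hh Ht). now rewrite Rplus_minus in Hdel.
Qed.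

Lemma ball_R_bounds (c : R) (r : posreal) (t : R) : ball c r t -> c - r < t < c + r.
Proof.
  intros Ht. apply Rabs_def2 in Ht. unfold minus, plus, opp in Ht. simpl in Ht. lra.
Qed.

Lemma lim_at_right_le (f : R -> R) (a b l : R) :
  filterlim f (at_right a) (locally l) -> a < b ->
  (forall t, a < t <= b -> f t <= f b) -> l <= f b.
Proof.
  intros Hlim Hab Hle.
  apply (closed_filterlim_loc f (fun v => v <= f b) l Hlim); [|apply closed_le].
  exists (mkposreal (b - a) ltac:(lra)). intros t Ht Hat.
  apply Hle. apply ball_R_bounds in Ht. simpl in Ht. lra.
Qed.

Lemma periodic_Z (f : R -> R) (T : R) :
  (forall t, f (t + T) = f t) -> forall (z : Z) t, f (t + T * IZR z) = f t.
Proof.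
  intros Hper z. induction z as [|z IH|z IH] using Z.peano_ind; intros t.
  - now rewrite Rmult_0_r, Rplus_0_r.
  - rewrite succ_IZR, <- (Hper t), <- (IH (t + T)). f_equal. ring.
  - rewrite <- Z.sub_1_r, minus_IZR.
    replace (t + T * (IZR z - 1)) with (t - T + T * IZR z) by ring.
    rewrite IH, <- (Hper (t - T)). f_equal. ring.
Qed.

Lemma periodic_representative (T s : R) :
  0 < T -> exists z : Z, 0 <= s + T * IZR z < T.
Proof.
  intros HT. exists (- Int_part (s / T))%Z. rewrite opp_IZR.
  destruct (base_Int_part (s / T)) as [Hlo Hhi].
  assert (Hs : s = T * (s / T)) by (field; lra).
  split; rewrite Hs at 1; nra.
Qed.

Section Tangent_angle_curve.
Variables x y : R -> R.
Hypothesis HC : in_C x y.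

Lemma speed_pos t : 0 < speed x y t.
Proof. apply HC. Qed.

Lemma ex_derive_x t : ex_derive x t.
Proof. exact (proj1 HC 1%nat t). Qed.

Lemma Derive_x t : Derive x t = speed x y t * cos t.
Proof. apply HC. Qed.

Lemma derive_x t : derivable_pt_lim x t (speed x y t * cos t).
Proof. apply is_derive_Reals. rewrite <- Derive_x. apply Derive_correct, ex_derive_x. Qed.

Lemma ex_derive_y t : ex_derive y t.
Proof. exact (proj1 (proj2 HC) 1%nat t). Qed.

Lemma Derive_y t : Derive y t = speed x y t * sin t.
Proof. apply HC. Qed.

Lemma derive_y t : derivable_pt_lim y t (speed x y t * sin t).
Proof. apply is_derive_Reals. rewrite <- Derive_y. apply Derive_correct, ex_derive_y. Qed.

Lemma x_add_2PI t : x (t + 2 * PI) = x t.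
Proof. apply HC. Qed.

Lemma y_add_2PI t : y (t + 2 * PI) = y t.
Proof. apply HC. Qed.

Lemma y_0_lt_y t : 0 < t < 2 * PI -> y 0 < y t.
Proof.
  intros Ht. destruct (Rle_lt_dec t PI) as [HtPI|HtPI].
  - apply (Rlt_of_derive_pos y (fun u => speed x y u * sin u)); [lra| |].
    + intros c _. apply derive_y.
    + intros c Hc. apply Rmult_lt_0_compat; [apply speed_pos|apply sin_gt_0; lra].
  - rewrite <- (y_add_2PI 0), Rplus_0_l. apply Ropp_lt_cancel.
    apply (Rlt_of_derive_pos (fun u => - y u) (fun u => - (speed x y u * sin u)));
      [lra| |].
    + intros c _. apply derivable_pt_lim_opp, derive_y.
    + intros c Hc. assert (sin c < 0) by (apply sin_lt_0; lra).
      pose proof (speed_pos c). nra.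
Qed.

Lemma x_0_eq_0 : (forall t, exists s, x s = - x t /\ y s = y t) -> x 0 = 0.
Proof.
  intros Hsym. destruct (Hsym 0) as [s [Hxs Hys]].
  assert (HPI := PI_RGT_0).
  destruct (periodic_representative (2 * PI) s ltac:(lra)) as [z Hz].
  assert (Hxz := periodic_Z x (2 * PI) x_add_2PI z s).
  assert (Hyz := periodic_Z y (2 * PI) y_add_2PI z s).
  destruct (Req_dec (s + 2 * PI * IZR z) 0) as [E|E].
  - rewrite E in Hxz. lra.
  - assert (y 0 < y (s + 2 * PI * IZR z)) by (apply y_0_lt_y; lra). lra.
Qed.

Lemma speed_le_of_curvature_ge a b :
  curvature x y b <= curvature x y a -> speed x y a <= speed x y b.
Proof.
  unfold curvature. intros Hinv.
  rewrite <- (Rinv_inv (speed x y a)), <- (Rinv_inv (speed x y b)).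
  apply Rinv_le_contravar; [|exact Hinv].
  apply Rinv_0_lt_compat, speed_pos.
Qed.

Lemma Pi_fun_derive c :
  sin c <> 0 ->
  derivable_pt_lim (Pi_fun x y) c ((speed x y c * sin c - x c) / sin c ^ 2).
Proof.
  intros Hs. apply is_derive_Reals. unfold Pi_fun. auto_derive.
  - repeat split; [apply ex_derive_y | apply ex_derive_x | exact Hs].
  - rewrite Derive_x, Derive_y. pose proof (sin2_cos2 c) as H1. unfold Rsqr in H1.
    field_simplify; [|exact Hs ..]. f_equal.
    replace (speed x y c * sin c ^ 3 + speed x y c * sin c * cos c ^ 2
               - sin c ^ 2 * x c - cos c ^ 2 * x c)
      with ((speed x y c * sin c - x c) * (sin c * sin c + cos c * cos c)) by ring.
    rewrite H1. ring.
Qed.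

Lemma Pi_fun_lim :
  x 0 = 0 -> filterlim (Pi_fun x y) (at_right 0) (locally (y 0 + speed x y 0)).
Proof.
  intros Hx0.
  assert (Hdx : is_lim (fun t => (x t - x 0) / (t - 0)) 0 (speed x y 0)).
  { rewrite <- (Rmult_1_r (speed x y 0)), <- cos_0.
    apply is_lim_difference_quotient, derive_x. }
  assert (Hcos : is_lim cos 0 1).
  { rewrite <- cos_0. apply is_lim_continuity, continuity_cos. }
  assert (Hy : is_lim y 0 (y 0)).
  { apply is_lim_continuity, derivable_continuous_pt. exact (exist _ _ (derive_y 0)). }
  assert (Hquot := is_lim_plus _ _ _ _ _ (Finite (y 0 + speed x y 0)) Hy
    (is_lim_div _ _ _ _ _ (is_lim_mult _ _ _ _ _ Hcos Hdx I) is_lim_sinc_0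
       ltac:(injection; lra) I)).
  simpl in Hquot.
  apply (filterlim_ext_loc (fun t => y t + cos t * ((x t - x 0) / (t - 0)) / (sin t / t))).
  - exists (mkposreal PI PI_RGT_0). intros t Ht Hpos. apply ball_R_bounds in Ht. simpl in Ht.
    assert (0 < sin t) by (apply sin_gt_0; lra).
    unfold Pi_fun. rewrite Hx0. field. lra.
  - apply (filterlim_filter_le_1 (F := Rbar_locally' (Finite 0))).
    + intros P [d Hd]. exists d. intros t Ht Hpos. apply Hd; [exact Ht|lra].
    + apply Hquot. unfold is_Rbar_plus. simpl. f_equal. f_equal. field.
Qed.

Section Speed_nondecreasing.
Variable M : R.
Hypothesis HM : M <= PI / 2.
Hypothesis Hx0 : x 0 = 0.
Hypothesis Hmono : forall a b, 0 <= a -> a <= b -> b <= M -> speed x y a <= speed x y b.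

Lemma x_le_speed_mul_sin t : 0 < t <= M -> x t <= speed x y t * sin t.
Proof.
  intros Ht.
  cut (speed x y t * sin 0 - x 0 <= speed x y t * sin t - x t).
  { rewrite Hx0, sin_0. lra. }
  apply (Rle_of_derive_nonneg (fun u => speed x y t * sin u - x u)
           (fun u => (speed x y t - speed x y u) * cos u)); [lra| |].
  - intros c _. apply is_derive_Reals. auto_derive; [apply ex_derive_x|].
    rewrite Derive_x. ring.
  - intros c Hc. apply Rmult_le_pos.
    + assert (speed x y c <= speed x y t) by (apply Hmono; lra). lra.
    + apply cos_ge_0; lra.
Qed.

Lemma Pi_fun_nondecreasing a b :
  0 < a -> a <= b -> b <= M -> Pi_fun x y a <= Pi_fun x y b.
Proof.
  intros Ha Hab Hb.
  assert (Hsin : forall c, a <= c <= b -> 0 < sin c) by (intros; apply sin_gt_0; lra).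
  apply (Rle_of_derive_nonneg _ (fun c => (speed x y c * sin c - x c) / sin c ^ 2) a b Hab).
  - intros c Hc. apply Pi_fun_derive. specialize (Hsin c Hc). lra.
  - intros c Hc. apply Rdiv_le_0_compat.
    + assert (x c <= speed x y c * sin c) by (apply x_le_speed_mul_sin; lra). lra.
    + apply pow_lt, Hsin. lra.
Qed.

End Speed_nondecreasing.
End Tangent_angle_curve.

Theorem proposition5p2 (n : nat) (hn : (2 <= n)%nat) (x y : R -> R) :
  in_S_down n x y -> in_S n x y.
Proof.
  intros [HC [HT Hcurv]]. split; [exact HC|]. split; [exact HT|].
  assert (Hx0 := x_0_eq_0 x y HC (proj1 HT)).
  assert (HPI := PI_RGT_0).
  assert (Hn : 2 <= INR n) by exact (le_INR 2 n hn).
  assert (HM : PI / INR n <= PI / 2).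
  { apply Rmult_le_compat_l; [lra|]. apply Rinv_le_contravar; lra. }
  assert (Hincr := Pi_fun_nondecreasing x y HC (PI / INR n) HM Hx0
    (fun a b Ha Hab Hb => speed_le_of_curvature_ge x y HC a b (Hcurv a b Ha Hab Hb))).
  exists (y 0 + speed x y 0). split; [exact (Pi_fun_lim x y HC Hx0)|].
  intros a b Ha Hab Hb. unfold Pi_ext.
  destruct (Req_EM_T a 0) as [Ea|Ea]; destruct (Req_EM_T b 0) as [Eb|Eb]; [lra| |lra|].
  - apply (lim_at_right_le _ 0 b _ (Pi_fun_lim x y HC Hx0)); [lra|].
    intros t Ht. apply Hincr; lra.
  - apply Hincr; lra.
Qed.
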